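(* Let $U\in\mathbb{R}^{n\times d}$, let $\mathbf{x}_*\in\mathbb{R}^d$ be $s$-sparse and $\mathbf{y}=U\mathbf{x}_*$ (noiseless). Let $\mathbf{x}_t$ be an iterate of Algorithm 1 with support $\mathcal{S}_t$, and $\mathcal{S}_*$ the support of $\mathbf{x}_*$. If $|\mathcal{S}_t\setminus\mathcal{S}_*|\le s$, $\|\mathbf{x}_t-\mathbf{x}_*\|_2\le\Delta_t$ and $\lambda_t=\frac{\delta_s+\sqrt2\theta_{s,s}}{\sqrt s}\Delta_t$, then \[ \|\mathbf{x}_{t+1}-\mathbf{x}_*\|_2\le(\delta_s+\sqrt2\theta_{s,s}+\delta_{3s})\Delta_t . \]
   Context: $U_{\mathcal T}$ is the column submatrix of $U$ indexed by $\mathcal T$. $\delta_k$ is the smallest constant $\ge0$ with $(1-\delta_k)\|\mathbf{v}\|_2^2\le\|U_{\mathcal T}\mathbf{v}\|_2^2\le(1+\delta_k)\|\mathbf{v}\|_2^2$ for all $|\mathcal T|\le k$, $\mathbf{v}\in\mathbb{R}^{|\mathcal T|}$; $\theta_{s,s}$ (with $2s\le d$) is the smallest constant with $|\langle U_{\mathcal T}\mathbf{v},U_{\mathcal T'}\mathbf{v}'\rangle|\le\theta_{s,s}\|\mathbf{v}\|_2\|\mathbf{v}'\|_2$ for all disjoint $\mathcal T,\mathcal T'$ of size at most $s$. Algorithm 1: $\mathbf{x}_1=0$ and $\mathbf{x}_{t+1}=\mathrm{sign}(\widehat{\mathbf{x}}_t)[|\widehat{\mathbf{x}}_t|-\lambda_t]_+$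 with $\widehat{\mathbf{x}}_t=\mathbf{x}_t-U^\top(U\mathbf{x}_t-\mathbf{y})$ (componentwise), for parameters $\lambda_t>0$. *)

From mathcomp Require Import all_boot all_order all_algebra.
Set Implicit Arguments. Unset Strict Implicit. Unset Printing Implicit Defensive.
Import Order.TTheory GRing.Theory Num.Theory.
Local Open Scope ring_scope.

Section Defs.
Variable R : rcfType.

Definition dotv (m : nat) (u v : 'cV[R]_m) : R := \sum_(i < m) u i 0 * v i 0.
Definition norm2 (m : nat) (v : 'cV[R]_m) : R := Num.sqrt (dotv v v).

Definition supp (m : nat) (v : 'cV[R]_m) : {set 'I_m} := [set i | v i 0 != 0].

(* U_T : column submatrix of U indexed by T (columns in increasing order) *)
Definition colsubT (n d : nat) (U : 'M[R]_(n, d)) (T : {set 'I_d}) : 'M[R]_(n, #|T|) :=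
  colsub (@enum_val _ (mem T)) U.

Definition rip_ok (n d : nat) (U : 'M[R]_(n, d)) (k : nat) (delta : R) : Prop :=
  0 <= delta /\
  forall T : {set 'I_d}, (#|T| <= k)%N -> forall v : 'cV[R]_#|T|,
    (1 - delta) * norm2 v ^+ 2 <= norm2 (colsubT U T *m v) ^+ 2 /\
    norm2 (colsubT U T *m v) ^+ 2 <= (1 + delta) * norm2 v ^+ 2.

Definition is_rip_const (n d : nat) (U : 'M[R]_(n, d)) (k : nat) (delta : R) : Prop :=
  rip_ok U k delta /\ forall delta', rip_ok U k delta' -> delta <= delta'.

Definition roc_ok (n d : nat) (U : 'M[R]_(n, d)) (s : nat) (theta : R) : Prop :=
  forall T T' : {set 'I_d}, (#|T| <= s)%N -> (#|T'| <= s)%N -> [disjoint T & T'] ->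
    forall (v : 'cV[R]_#|T|) (v' : 'cV[R]_#|T'|),
      `|dotv (colsubT U T *m v) (colsubT U T' *m v')| <= theta * norm2 v * norm2 v'.

Definition is_roc_const (n d : nat) (U : 'M[R]_(n, d)) (s : nat) (theta : R) : Prop :=
  roc_ok U s theta /\ forall theta', roc_ok U s theta' -> theta <= theta'.

Definition ista_step (n d : nat) (U : 'M[R]_(n, d)) (y : 'cV[R]_n) (lam : R)
    (x : 'cV[R]_d) : 'cV[R]_d :=
  let xh := x - U^T *m (U *m x - y) in
  \col_i (Num.sg (xh i 0) * Num.max (`|xh i 0| - lam) 0).

Fixpoint ista_aux (n d : nat) (U : 'M[R]_(n, d)) (y : 'cV[R]_n) (lam : nat -> R)
    (k : nat) : 'cV[R]_d :=
  match k with
  | O => 0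
  | S k' => ista_step U y (lam k) (ista_aux U y lam k')
  end.

(* iterates of Algorithm 1, indexed from 1: x_1 = 0, x_{t+1} = step(lambda_t, x_t) *)
Definition ista (n d : nat) (U : 'M[R]_(n, d)) (y : 'cV[R]_n) (lam : nat -> R)
    (t : nat) : 'cV[R]_d := ista_aux U y lam t.-1.

End Defs.

From mathcomp Require Import all_boot all_order all_algebra.
From mathcomp Require Import ring lra zify.
Set Implicit Arguments. Unset Strict Implicit. Unset Printing Implicit Defensive.
Import Order.TTheory GRing.Theory Num.Theory.
Local Open Scope ring_scope.

(** Write [h = x_t - x_star] and [e = (I - U^T U) h], so that the vector thresholded by the
    algorithm is [x_star + e].  Soft thresholding moves each coordinate by at most [lambda],
    and off the support [S] of [x_star] it shrinks [|e_i|] and kills it when [|e_i| <= lambda];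
    hence [|x_{t+1} - x_star| <= |e_W| + sqrt s lambda] for [W = S ∪ A ∪ T], where
    [A = S_t \ S] and [T] is the set of remaining coordinates with [|e_i| > lambda].  On [T]
    we have [e = -U^T U h], and restricted orthogonality applied to the parts of [h] on [S]
    and on [A] bounds the restriction of [U^T U h] to any [s] such coordinates by
    [sqrt 2 theta |h| <= sqrt s lambda], so [|T| < s].  Thus [|W| <= 3s], and the restricted
    isometry of order [3s] gives [|e_W| <= delta_3s |h|]. *)

Section EuclideanNorm.
Variable R : rcfType.

Lemma dotvC m (u v : 'cV[R]_m) : dotv u v = dotv v u.
Proof. by apply: eq_bigr => i _; rewrite mulrC. Qed.

Lemma dotvDl m (u v w : 'cV[R]_m) : dotv (u + v) w = dotv u w + dotv v w.
Proof. by rewrite /dotv -big_split; apply: eq_bigr => i _; rewrite mxE mulrDl. Qed.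

Lemma dotvDr m (u v w : 'cV[R]_m) : dotv w (u + v) = dotv w u + dotv w v.
Proof. by rewrite dotvC dotvDl !(dotvC w). Qed.

Lemma dotvZl m (k : R) (u v : 'cV[R]_m) : dotv (k *: u) v = k * dotv u v.
Proof. by rewrite /dotv mulr_sumr; apply: eq_bigr => i _; rewrite mxE mulrA. Qed.

Lemma dotvZr m (k : R) (u v : 'cV[R]_m) : dotv v (k *: u) = k * dotv v u.
Proof. by rewrite dotvC dotvZl dotvC. Qed.

Lemma dotvNl m (u v : 'cV[R]_m) : dotv (- u) v = - dotv u v.
Proof. by rewrite -scaleN1r dotvZl mulN1r. Qed.

Lemma dotvNr m (u v : 'cV[R]_m) : dotv v (- u) = - dotv v u.
Proof. by rewrite dotvC dotvNl dotvC. Qed.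

Lemma dotv_ge0 m (u : 'cV[R]_m) : 0 <= dotv u u.
Proof. by rewrite sumr_ge0 // => i _; rewrite -expr2 sqr_ge0. Qed.

Lemma dotv_eq0l m (u v : 'cV[R]_m) : dotv u u = 0 -> dotv u v = 0.
Proof.
move=> uu0; rewrite /dotv big1 // => i _.
have /eqP : u i 0 * u i 0 = 0.
  by apply: (psumr_eq0P _ uu0) => // j _; rewrite -expr2 sqr_ge0.
by rewrite mulf_eq0 orbb => /eqP ->; rewrite mul0r.
Qed.

Lemma dotv_mulmx n d (U : 'M[R]_(n, d)) (a : 'cV[R]_d) (b : 'cV[R]_n) :
  dotv (U *m a) b = dotv a (U^T *m b).
Proof.
rewrite /dotv; under eq_bigr do rewrite mxE big_distrl /=.
rewrite exchange_big /=; apply: eq_bigr => j _.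
by rewrite mxE big_distrr /=; apply: eq_bigr => i _; rewrite mxE; ring.
Qed.

Lemma norm2_ge0 m (u : 'cV[R]_m) : 0 <= norm2 u.
Proof. exact: sqrtr_ge0. Qed.

Lemma sqr_norm2 m (u : 'cV[R]_m) : norm2 u ^+ 2 = dotv u u.
Proof. by rewrite sqr_sqrtr // dotv_ge0. Qed.

Lemma norm2N m (u : 'cV[R]_m) : norm2 (- u) = norm2 u.
Proof. by rewrite /norm2 dotvNl dotvNr opprK. Qed.

Lemma norm2_le m (u : 'cV[R]_m) (b : R) : 0 <= b -> dotv u u <= b ^+ 2 -> norm2 u <= b.
Proof. by move=> b0 ub; rewrite -(ger0_norm b0) -sqrtr_sqr ler_sqrt ?sqr_ge0. Qed.

Lemma dotv_le_norm2 m (u v : 'cV[R]_m) : dotv u v <= norm2 u * norm2 v.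
Proof.
have [a0 b0] := (norm2_ge0 u, norm2_ge0 v).
have [A B] := (sqr_norm2 u, sqr_norm2 v).
have [a_eq0|a_neq0] := eqVneq (norm2 u) 0.
  by rewrite a_eq0 mul0r dotv_eq0l // -A a_eq0 expr0n.
have [b_eq0|b_neq0] := eqVneq (norm2 v) 0.
  by rewrite b_eq0 mulr0 dotvC dotv_eq0l // -B b_eq0 expr0n.
(* Sum the entrywise inequalities 0 <= (u_i |v| - v_i |u|)^2. *)
have key : dotv u v * (2 * norm2 u * norm2 v)
           <= dotv u u * norm2 v ^+ 2 + dotv v v * norm2 u ^+ 2.
  rewrite /dotv !mulr_suml -big_split /= ler_sum // => i _.
  by have := sqr_ge0 (u i 0 * norm2 v - v i 0 * norm2 u); nra.
have ab : 0 < norm2 u * norm2 v by rewrite mulr_gt0 // lt_def ?a_neq0 ?b_neq0.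
rewrite -A -B in key; nra.
Qed.

Lemma norm2D m (u v : 'cV[R]_m) : norm2 (u + v) <= norm2 u + norm2 v.
Proof.
apply: norm2_le; first by rewrite addr_ge0 ?norm2_ge0.
rewrite dotvDl !dotvDr (dotvC v u) -!sqr_norm2.
by have := dotv_le_norm2 u v; nra.
Qed.

Lemma norm2_le_entrywise m (u v : 'cV[R]_m) :
  (forall i, `|u i 0| <= `|v i 0|) -> norm2 u <= norm2 v.
Proof.
move=> uv; apply: norm2_le (norm2_ge0 v) _; rewrite sqr_norm2 ler_sum // => i _.
by rewrite -!expr2 -(real_normK (num_real (u i 0))) -(real_normK (num_real (v i 0)))
   lerXn2r ?nnegrE.
Qed.

End EuclideanNorm.

Section RestrictedIsometry.
Variables (R : rcfType) (n d : nat) (U : 'M[R]_(n, d)).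
Implicit Types (T W : {set 'I_d}) (g h x y : 'cV[R]_d).

Definition supported W g := forall i, i \notin W -> g i 0 = 0.

Definition restr W g : 'cV[R]_#|W| := \col_k g (enum_val k) 0.

Definition proj W g : 'cV[R]_d := \col_i (if i \in W then g i 0 else 0).

Lemma supported_supp g : supported (supp g) g.
Proof. by move=> i; rewrite inE negbK => /eqP. Qed.

Lemma supportedD W x y : supported W x -> supported W y -> supported W (x + y).
Proof. by move=> sx sy i iW; rewrite mxE sx // sy // addr0. Qed.

Lemma supportedN W x : supported W x -> supported W (- x).
Proof. by move=> sx i iW; rewrite mxE sx // oppr0. Qed.

Lemma supportedZ W (k : R) x : supported W x -> supported W (k *: x).
Proof. by move=> sx i iW; rewrite mxE sx // mulr0. Qed.

Lemma supported_proj W g : supported W (proj W g).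
Proof. by move=> i iW; rewrite mxE (negbTE iW). Qed.

Lemma colsubT_restr W g : supported W g -> colsubT U W *m restr W g = U *m g.
Proof.
move=> sg; apply/matrixP => i j; rewrite (ord1 j) !mxE.
rewrite (bigID (mem W)) /= [X in _ = _ + X]big1 ?addr0; last first.
  by move=> k kW; rewrite sg // mulr0.
by rewrite [RHS]big_enum_val; apply: eq_bigr => k _; rewrite !mxE.
Qed.

Lemma dotv_restr W g g' : supported W g -> dotv (restr W g) (restr W g') = dotv g g'.
Proof.
move=> sg; rewrite /dotv [RHS](bigID (mem W)) /= [X in _ = _ + X]big1 ?addr0; last first.
  by move=> k kW; rewrite sg // mul0r.
by rewrite [RHS]big_enum_val; apply: eq_bigr => k _; rewrite !mxE.
Qed.

Lemma norm2_restr W g : supported W g -> norm2 (restr W g) = norm2 g.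
Proof. by move=> sg; rewrite /norm2 dotv_restr. Qed.

Lemma dotv_projl W g g' : dotv (proj W g) g' = dotv (proj W g) (proj W g').
Proof. by apply: eq_bigr => i _; rewrite !mxE; case: (i \in W); rewrite ?mul0r. Qed.

Lemma dotv_proj W g : dotv (proj W g) (proj W g) = \sum_(i in W) g i 0 ^+ 2.
Proof.
rewrite /dotv [RHS]big_mkcond /=; apply: eq_bigr => i _; rewrite !mxE.
by case: (i \in W); rewrite ?mul0r ?expr2.
Qed.

Lemma proj_id W g : supported W g -> proj W g = g.
Proof.
by move=> sg; apply/matrixP => i j; rewrite (ord1 j) mxE; case: ifPn => // /sg ->.
Qed.

Lemma proj_setU W W' g : [disjoint W & W'] -> proj (W :|: W') g = proj W g + proj W' g.
Proof.
move=> dWW'; apply/matrixP => i j; rewrite (ord1 j) !mxE in_setU.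
case: (boolP (i \in W)) => iW /=; last by rewrite add0r.
by rewrite (disjointFr dWW' iW) addr0.
Qed.

Lemma dotv_proj_disjoint W W' g g' :
  [disjoint W & W'] -> dotv (proj W g) (proj W' g') = 0.
Proof.
move=> dWW'; rewrite /dotv big1 // => i _; rewrite !mxE.
by case: (boolP (i \in W)) => iW; rewrite ?mul0r ?(disjointFr dWW' iW) ?mulr0.
Qed.

Lemma rip_ok_supported k delta W g :
  rip_ok U k delta -> (#|W| <= k)%N -> supported W g ->
  (1 - delta) * dotv g g <= dotv (U *m g) (U *m g) /\
  dotv (U *m g) (U *m g) <= (1 + delta) * dotv g g.
Proof.
move=> [_ rip] Wk sg; have := rip W Wk (restr W g).
by rewrite colsubT_restr // norm2_restr // !sqr_norm2.
Qed.

Lemma roc_ok_supported s theta T (T' : {set 'I_d}) g g' :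
  roc_ok U s theta -> (#|T| <= s)%N -> (#|T'| <= s)%N -> [disjoint T & T'] ->
  supported T g -> supported T' g' ->
  `|dotv (U *m g) (U *m g')| <= theta * norm2 g * norm2 g'.
Proof.
move=> roc Ts T's dTT' sg sg'; have := roc T T' Ts T's dTT' (restr T g) (restr T' g').
by rewrite !colsubT_restr // !norm2_restr.
Qed.

Lemma rip_ok_polar k delta W x y :
  rip_ok U k delta -> (#|W| <= k)%N -> supported W x -> supported W y ->
  4 * (dotv (U *m x) (U *m y) - dotv x y) <= 2 * delta * (dotv x x + dotv y y).
Proof.
move=> rip Wk sx sy.
have [_] := rip_ok_supported rip Wk (supportedD sx sy).
have [+ _] := rip_ok_supported rip Wk (supportedD sx (supportedN sy)).
rewrite !mulmxDr !mulmxN !(dotvDl, dotvDr, dotvNl, dotvNr) (dotvC y x).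
by rewrite (dotvC (U *m y)); nra.
Qed.

Lemma rip_ok_dotv_sub k delta W x y :
  rip_ok U k delta -> (#|W| <= k)%N -> supported W x -> supported W y ->
  dotv (U *m x) (U *m y) - dotv x y <= delta * norm2 x * norm2 y.
Proof.
move=> rip Wk sx sy; have delta0 : 0 <= delta by case: rip.
have isotropic g : supported W g -> norm2 g = 0 -> dotv g g = 0 /\ dotv (U *m g) (U *m g) = 0.
  move=> sg g0; have gg0 : dotv g g = 0 by rewrite -sqr_norm2 g0 expr0n.
  have [_] := rip_ok_supported rip Wk sg; rewrite gg0 mulr0 => Ugg.
  by split=> //; apply/eqP; rewrite eq_le Ugg dotv_ge0.
have [x0|x_neq0] := eqVneq (norm2 x) 0.
  have [xx0 Uxx0] := isotropic x sx x0.
  by rewrite x0 mulr0 mul0r (dotv_eq0l _ Uxx0) (dotv_eq0l _ xx0) subrr.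
have [y0|y_neq0] := eqVneq (norm2 y) 0.
  have [yy0 Uyy0] := isotropic y sy y0.
  by rewrite y0 mulr0 dotvC [dotv x y]dotvC (dotv_eq0l _ Uyy0) (dotv_eq0l _ yy0) subrr.
(* Polarize the rescaled vectors |y| x and |x| y, which have equal norms. *)
have := rip_ok_polar rip Wk (supportedZ (norm2 y) sx) (supportedZ (norm2 x) sy).
rewrite -!scalemxAr !(dotvZl, dotvZr) -!sqr_norm2.
have xy0 : 0 < norm2 x * norm2 y by rewrite mulr_gt0 // lt_def ?x_neq0 ?y_neq0 norm2_ge0.
by nra.
Qed.

Definition gram_defect h := h - U^T *m (U *m h).

Lemma rip_ok_proj_gram_defect k delta W h :
  rip_ok U k delta -> (#|W| <= k)%N -> supported W h ->
  norm2 (proj W (gram_defect h)) <= delta * norm2 h.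
Proof.
move=> rip Wk sh; have delta0 : 0 <= delta by case: rip.
set e := proj W _.
have ee : norm2 e ^+ 2 = dotv (U *m e) (U *m (- h)) - dotv e (- h).
  rewrite sqr_norm2 /e -dotv_projl -/e /gram_defect dotvDr !dotvNr -dotv_mulmx.
  by rewrite mulmxN dotvNr; ring.
have se : supported W e by apply: supported_proj.
have := rip_ok_dotv_sub rip Wk se (supportedN sh).
rewrite -/e -ee norm2N.
have [e0|e_neq0] := eqVneq (norm2 e) 0.
  by rewrite e0 mulr_ge0 ?norm2_ge0.
have : 0 < norm2 e by rewrite lt_def e_neq0 norm2_ge0.
by have := norm2_ge0 h; nra.
Qed.

End RestrictedIsometry.

Section SoftThresholding.
Variables (R : rcfType) (lam : R).
Hypothesis lam_ge0 : 0 <= lam.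

Definition soft_thresh (z : R) : R := Num.sg z * Num.max (`|z| - lam) 0.

Local Ltac soft_thresh_cases z :=
  let z0 := fresh "z0" in let zlam := fresh "zlam" in
  rewrite /soft_thresh maxEle;
  case: (ltrgtP z 0) => [z0|z0|->];
  [ rewrite (ltr0_sg z0) (ltr0_norm z0)
  | rewrite (gtr0_sg z0) (gtr0_norm z0)
  | rewrite sgr0 ?normr0 ?subr0 ?mul0r ?normr0 // ];
  case: ifP => /= [zlam|/negbT zlam]; rewrite -?ltNge in zlam;
  have := lam_ge0.

Lemma soft_thresh_dist z : `|soft_thresh z - z| <= lam.
Proof.
by soft_thresh_cases z; rewrite ?ler_norml; try (apply/andP; split); lra.
Qed.

Lemma soft_thresh_norm_le z : `|soft_thresh z| <= `|z|.
Proof.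
by soft_thresh_cases z; rewrite ?normr_le0 ?ler_norml; try (apply/andP; split); lra.
Qed.

Lemma soft_thresh_small z : `|z| <= lam -> soft_thresh z = 0.
Proof. by soft_thresh_cases z => ?; lra. Qed.

End SoftThresholding.

Lemma soft_thresh_error (R : rcfType) d (xs e : 'cV[R]_d) (l : R) (S W : {set 'I_d}) :
  0 <= l -> supported S xs -> S \subset W -> (forall i, i \notin W -> `|e i 0| <= l) ->
  norm2 (\col_i soft_thresh l ((xs + e) i 0) - xs)
    <= norm2 (proj W e) + Num.sqrt (#|S|%:R) * l.
Proof.
move=> l0 sxs SW eW; set b := proj S (const_mx l).
have entry i : `|(\col_i soft_thresh l ((xs + e) i 0) - xs) i 0|
               <= `|(\col_j `|proj W e j 0| + b) i 0|.
  rewrite !mxE [leRHS]ger0_norm; last by rewrite addr_ge0 //; case: ifP.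
  have [iS|iS] := boolP (i \in S).
    rewrite (subsetP SW i iS).
    set z := xs i 0 + e i 0.
    rewrite (_ : _ - _ = soft_thresh l z - z + e i 0); last by rewrite /z; ring.
    apply: le_trans (ler_normD _ _) _.
    by rewrite [leRHS]addrC lerD2r soft_thresh_dist.
  rewrite sxs // add0r subr0 addr0.
  have [iW|iW] := boolP (i \in W); first exact: soft_thresh_norm_le.
  by rewrite soft_thresh_small ?eW // normr0.
apply: le_trans (norm2_le_entrywise entry) _; apply: le_trans (norm2D _ _) _.
apply: lerD; first by apply: norm2_le_entrywise => i; rewrite mxE normr_id.
apply: norm2_le; first by rewrite mulr_ge0 ?sqrtr_ge0.
rewrite dotv_proj (eq_bigr (fun _ => l ^+ 2)) => [|i _]; last by rewrite mxE.
by rewrite sumr_const exprMn sqr_sqrtr ?ler0n // mulr_natl.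
Qed.

Section IstaStep.
Variables (R : rcfType) (n d : nat) (U : 'M[R]_(n, d)) (s : nat) (theta : R).
Hypothesis roc : roc_ok U s theta.
Implicit Types (S A T : {set 'I_d}) (h : 'cV[R]_d).

Lemma roc_ok_proj_gram S A T h :
  (#|S| <= s)%N -> (#|A| <= s)%N -> (#|T| <= s)%N ->
  [disjoint S & A] -> [disjoint T & S :|: A] -> supported (S :|: A) h ->
  norm2 (proj T (U^T *m (U *m h))) ^+ 2
    <= Num.sqrt 2 * theta * norm2 (proj T (U^T *m (U *m h))) * norm2 h.
Proof.
move=> Ss As Ts dSA dT sh; set v := proj T _.
have hE : h = proj S h + proj A h by rewrite -proj_setU // proj_id.
have vv : norm2 v ^+ 2 = dotv (U *m v) (U *m proj S h) + dotv (U *m v) (U *m proj A h).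
  by rewrite sqr_norm2 /v -dotv_projl -dotv_mulmx -dotvDr -mulmxDr -hE.
have hh : norm2 h ^+ 2 = norm2 (proj S h) ^+ 2 + norm2 (proj A h) ^+ 2.
  rewrite !sqr_norm2 {1 2}hE dotvDl !dotvDr (dotv_proj_disjoint _ _ dSA).
  by rewrite disjoint_sym in dSA; rewrite (dotv_proj_disjoint _ _ dSA); ring.
have sv : supported T v by apply: supported_proj.
have bS := roc_ok_supported roc Ts Ss (disjointWr (subsetUl S A) dT) sv
  (@supported_proj _ _ S h).
have bA := roc_ok_supported roc Ts As (disjointWr (subsetUr S A) dT) sv
  (@supported_proj _ _ A h).
have x0 := norm2_ge0 v.
have xpq : norm2 v ^+ 2 <= theta * norm2 v * (norm2 (proj S h) + norm2 (proj A h)).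
  rewrite vv; have := ler_norm (dotv (U *m v) (U *m proj S h)).
  by have := ler_norm (dotv (U *m v) (U *m proj A h)); lra.
have [theta0|theta_lt0] := leP 0 theta.
  have pqa : norm2 (proj S h) + norm2 (proj A h) <= Num.sqrt 2 * norm2 h.
    rewrite -(ler_pXn2r (_ : 0 < 2)%N) ?nnegrE ?addr_ge0 ?mulr_ge0 ?sqrtr_ge0 ?norm2_ge0 //.
    by rewrite exprMn sqr_sqrtr // hh; have := sqr_ge0 (norm2 (proj S h) - norm2 (proj A h)); lra.
  by have := mulr_ge0 theta0 x0; nra.
have -> : norm2 v = 0.
  apply/eqP; rewrite -sqrf_eq0 eq_le sqr_ge0 andbT (le_trans xpq) //.
  by rewrite -mulrA nmulr_rle0 // mulr_ge0 // addr_ge0 ?norm2_ge0.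
by rewrite expr0n mulr0 mul0r.
Qed.

Lemma card_large_gram_defect_lt S A T h (l : R) :
  (0 < s)%N -> 0 <= l -> (#|S| <= s)%N -> (#|A| <= s)%N ->
  [disjoint S & A] -> supported (S :|: A) h ->
  Num.sqrt 2 * theta * norm2 h <= Num.sqrt s%:R * l ->
  [disjoint T & S :|: A] -> (forall i, i \in T -> l < `|gram_defect U h i 0|) ->
  (#|T| < s)%N.
Proof.
move=> s_gt0 l0 Ss As dSA sh hl dT large; rewrite ltnNge; apply/negP.
case/card_geqP => q [q_uniq q_size qT].
set T0 := [set i in q].
have T0s : #|T0| = s by rewrite cardsE -q_size; apply/card_uniqP.
have T0T : T0 \subset T by apply/subsetP => i; rewrite inE; apply: qT.
set v := proj T0 (U^T *m (U *m h)).
(* Off the support of h the gram defect is -U^T U h, so v collects s entries above l. *)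
have lower : s%:R * l ^+ 2 < norm2 v ^+ 2.
  rewrite sqr_norm2 dotv_proj -T0s mulr_natl -sumr_const; apply: ltr_sum.
    have /card_gt0P [i iT0] : (0 < #|T0|)%N by rewrite T0s.
    by apply/hasP; exists i; rewrite ?mem_index_enum.
  move=> i iT0; have iT := subsetP T0T i iT0.
  have hi : h i 0 = 0 by apply: sh; rewrite (disjointFr dT iT).
  have := large i iT; rewrite /gram_defect mxE hi add0r mxE normrN.
  rewrite -(real_normK (num_real ((U^T *m (U *m h)) i 0))).
  by have := normr_ge0 ((U^T *m (U *m h)) i 0); nra.
have upper := roc_ok_proj_gram Ss As (eq_leq T0s) dSA (disjointWl T0T dT) sh.
rewrite -/v in upper.
set c := Num.sqrt s%:R * l in hl lower.
have c2 : c ^+ 2 = s%:R * l ^+ 2 by rewrite exprMn sqr_sqrtr ?ler0n.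
have vc : norm2 v ^+ 2 <= norm2 v * c.
  by apply: (le_trans upper); have := norm2_ge0 v; nra.
by have := sqr_ge0 (norm2 v - c); nra.
Qed.

Lemma ista_step_error delta xs x (l : R) :
  rip_ok U (3 * s) delta -> (0 < s)%N -> 0 <= l ->
  (#|supp xs| <= s)%N -> (#|supp x :\: supp xs| <= s)%N ->
  Num.sqrt 2 * theta * norm2 (x - xs) <= Num.sqrt s%:R * l ->
  norm2 (ista_step U (U *m xs) l x - xs)
    <= delta * norm2 (x - xs) + Num.sqrt s%:R * l.
Proof.
move=> rip s_gt0 l0 + + hl; set S := supp xs; set A := supp x :\: S => Ss As.
set h := x - xs.
have dSA : [disjoint S & A].
  by rewrite disjoint_subset; apply/subsetP => i; rewrite !inE => ->.
have sh : supported (S :|: A) h.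
  move=> i; rewrite !inE negb_or negbK => /andP[/eqP xsi].
  by rewrite xsi eqxx /= negbK => /eqP xi; rewrite !mxE xsi xi subrr.
set T := [set i | (i \notin S :|: A) && (l < `|gram_defect U h i 0|)].
have Ts : (#|T| < s)%N.
  apply: card_large_gram_defect_lt s_gt0 l0 Ss As dSA sh hl _ _ => [|i].
    by rewrite disjoint_subset; apply/subsetP => i; rewrite inE => /andP[].
  by rewrite inE => /andP[].
set W := S :|: A :|: T.
have Ws : (#|W| <= 3 * s)%N.
  rewrite /W; have := (leq_card_setU (S :|: A) T).1; have := (leq_card_setU S A).1.
  lia.
have xhat : x - U^T *m (U *m x - U *m xs) = xs + gram_defect U h.
  by rewrite -mulmxBr /gram_defect /h addrA [xs + _]addrC subrK.
have -> : ista_step U (U *m xs) l x = \col_i soft_thresh l ((xs + gram_defect U h) i 0).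
  by rewrite /ista_step /= xhat.
have sxs : supported S xs by apply: supported_supp.
apply: le_trans (soft_thresh_error (W := W) l0 sxs _ _) _.
- by rewrite /W -setUA subsetUl.
- move=> i; rewrite /W in_setU negb_or => /andP[iSA].
  by rewrite inE iSA /= -leNgt.
apply: lerD.
  apply: rip_ok_proj_gram_defect rip Ws _ => i.
  by rewrite /W in_setU negb_or => /andP[/sh].
by rewrite ler_wpM2r // ler_wsqrtr // ler_nat.
Qed.

End IstaStep.

Theorem proposition2 (R : rcfType) (n d s : nat) (U : 'M[R]_(n, d))
    (xs : 'cV[R]_d) (lam : nat -> R) (t : nat)
    (Delta delta_s delta_3s theta_ss : R) :
  (0 < s)%N -> (2 * s <= d)%N ->
  (#|supp xs| <= s)%N ->
  (forall k, 0 < lam k) ->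
  is_rip_const U s delta_s ->
  is_rip_const U (3 * s) delta_3s ->
  is_roc_const U s theta_ss ->
  (0 < t)%N ->
  (#|supp (ista U (U *m xs) lam t) :\: supp xs| <= s)%N ->
  norm2 (ista U (U *m xs) lam t - xs) <= Delta ->
  lam t = (delta_s + Num.sqrt 2 * theta_ss) / Num.sqrt (s%:R) * Delta ->
  norm2 (ista U (U *m xs) lam t.+1 - xs) <= (delta_s + Num.sqrt 2 * theta_ss + delta_3s) * Delta.
Proof.
move=> s_gt0 _ Ss lam_gt0 [[delta_s0 _] _] [rip3 _] [roc _] t_gt0 As hD lamE.
have -> : ista U (U *m xs) lam t.+1 = ista_step U (U *m xs) (lam t) (ista U (U *m xs) lam t).
  by case: t t_gt0 {As hD lamE}.
set x := ista U (U *m xs) lam t in As hD *.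
have Delta0 : 0 <= Delta := le_trans (norm2_ge0 _) hD.
have sqrt_s_gt0 : 0 < Num.sqrt (s%:R : R) by rewrite sqrtr_gt0 ltr0n.
have sqrt_s_lam : Num.sqrt s%:R * lam t = (delta_s + Num.sqrt 2 * theta_ss) * Delta.
  by rewrite lamE mulrA mulrCA divff ?mulr1 // gt_eqF.
have sqrt2_0 : 0 <= Num.sqrt (2 : R) := sqrtr_ge0 _.
have hl : Num.sqrt 2 * theta_ss * norm2 (x - xs) <= Num.sqrt s%:R * lam t.
  rewrite sqrt_s_lam; have [theta0|theta_lt0] := leP 0 theta_ss.
    have := ler_wpM2l (mulr_ge0 sqrt2_0 theta0) hD.
    by have := mulr_ge0 delta_s0 Delta0; lra.
  apply: (@le_trans _ _ 0); first by rewrite nmulr_rle0 ?norm2_ge0 // pmulr_rlt0 ?sqrtr_gt0.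
  by rewrite -sqrt_s_lam mulr_ge0 ?ltW.
apply: le_trans (ista_step_error roc rip3 s_gt0 (ltW (lam_gt0 t)) Ss As hl) _.
rewrite sqrt_s_lam [_ + delta_3s]addrC [leRHS]mulrDl lerD2r.
by apply: ler_wpM2l hD; case: rip3.
Qed.
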